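(* Let $\lambda=(\lambda_1,\dots,\lambda_d)$ be a partition of $n\ge2$ such that $\gcd(n-1,\lambda_t)=1$ for every $t$. Then for distinct $i,j\in\{1,\dots,n-2\}$, we have $i\preceq j$ in $P(\lambda)$ if and only if $i<j$ and $s_{t,i}>s_{t,j}>0$ for every $t\in\{1,\dots,d\}$.
   Context: $\Delta_\lambda=\mathrm{conv}(e_1,\dots,e_d,\lambda)\subset\mathbb{R}^d$, with fundamental parallelepiped $\Pi_\lambda=\{\sum_{i=1}^d\gamma_i(1,e_i)+\gamma_{d+1}(1,\lambda):0\le\gamma_i<1\}\subset\mathbb{R}^{d+1}$. $P(\lambda)$ is $\Pi_\lambda\cap\mathbb{Z}^{d+1}$ ordered by $\sigma\preceq\mu$ iff $\mu-\sigma\in\Pi_\lambda\cap\mathbb{Z}^{d+1}$. For $0\le b<n-1$ set $p(b)=\left(\sum_{t}\lceil b\lambda_t/(n-1)\rceil-b,\ \lceil b\lambda_1/(n-1)\rceil,\dots,\lceil b\lambda_d/(n-1)\rceil\right)$; $b\mapsto p(b)$ is a bijection from $\{0,\dots,n-2\}$ onto $\Pi_\lambda\cap\mathbb{Z}^{d+1}$ and each integer $b$ is identified with $p(b)$. For $0\le i<n-1$ and $1\le t\le d$, the integers $r_{t,i}\ge0$ and $0\le s_{t,i}<n-1$ are defined by $i\lambda_t=r_{t,i}(n-1)+s_{t,i}$. *)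

From Stdlib Require Import Rdefinitions.
From HB Require Import structures.
From mathcomp Require Import all_boot all_order all_algebra.
From mathcomp Require Import Rstruct.
Set Implicit Arguments. Unset Strict Implicit. Unset Printing Implicit Defensive.
Import Order.TTheory GRing.Theory Num.Theory.

Definition is_partition (n : nat) (lam : seq nat) : Prop :=
  [/\ sorted geq lam, all (fun x => 0 < x) lam & sumn lam = n].

Definition ceil_div (a m : nat) : nat := (a + m.-1) %/ m.

(* p(b) as a function of the coordinate index k in {0,...,d}:
   coordinate 0 is  sum_t ceil(b lam_t/(n-1)) - b,
   coordinate t (1 <= t <= d) is ceil(b lam_t/(n-1)). *)
Definition pcoord (lam : seq nat) (n b k : nat) : int :=
  if k == 0%N then
    (Posz (\sum_(t <- lam) ceil_div (b * t) n.-1) - Posz b)%R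
  else Posz (ceil_div (b * nth 0%N lam k.-1) n.-1).

(* v (a vector of Z^{d+1}, coordinates indexed 0..d) lies in the
   fundamental parallelepiped Pi_lam: v = sum_{i=1}^d g_i (1,e_i) + g_{d+1} (1,lam)
   with real 0 <= g_i < 1.  Here g k (k < d) plays gamma_{k+1}, g d plays gamma_{d+1}. *)
Definition inPi (lam : seq nat) (v : nat -> int) : Prop :=
  exists g : nat -> R,
    [/\ (forall k, (k <= size lam)%N -> (0 <= g k)%R /\ (g k < 1)%R),
        ((v 0%N)%:~R = \sum_(k < (size lam).+1) g k)%R
      & forall t, (t < size lam)%N ->
          ((v t.+1)%:~R = g t + g (size lam) * (nth 0%N lam t)%:R)%R].

Definition preceq (lam : seq nat) (n i j : nat) : Prop :=
  inPi lam (fun k => (pcoord lam n j k - pcoord lam n i k)%R).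

(* s_{t,i}: i * lam_t = r_{t,i} (n-1) + s_{t,i}, 0 <= s < n-1; t is 0-based here *)
Definition s_coef (lam : seq nat) (n t i : nat) : nat := (i * nth 0%N lam t) %% n.-1.

(** Write m = n - 1.  Coprimality of m and lam_t makes s_{t,b} > 0 for
    0 < b < m, so ceil(b lam_t / m) = (b lam_t - s_{t,b}) / m + 1.  Hence
    p(j) - p(i) = sum_t a_t (1, e_t) + c (1, lam) with
    a_t = (s_{t,i} - s_{t,j}) / m and c = (j - i) / m, and since these
    generators are linearly independent, p(j) - p(i) lies in Pi_lam exactly
    when every a_t and c lie in [0, 1), i.e. when i <= j and s_{t,j} <= s_{t,i}.
    Coprimality also makes b |-> s_{t,b} injective on [0, m), which turns
    these into the strict inequalities (and i <> j into i < j). *)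

From mathcomp Require Import all_boot all_order all_algebra.
From Stdlib Require Import Rdefinitions.
From mathcomp Require Import Rstruct ring lra zify.
Import Order.TTheory GRing.Theory Num.Theory.

Lemma ceil_div_nondvd (a m : nat) :
  0 < m -> ~~ (m %| a) -> ceil_div a m = (a %/ m).+1.
Proof.
move=> hm; rewrite /dvdn -lt0n => hr; rewrite /ceil_div {1}(divn_eq a m).
have hrm : a %% m < m by rewrite ltn_mod.
rewrite (_ : _ + m.-1 = (a %/ m).+1 * m + (a %% m).-1); last by lia.
by rewrite divnMDl // (divn_small (m := (a %% m).-1)) ?addn0 //; lia.
Qed.

Lemma coprime_Ndvdn_mul {m L b : nat} :
  coprime m L -> 0 < b < m -> ~~ (m %| b * L).
Proof.
move=> hc /andP[hb hbm]; rewrite Gauss_dvdl //; apply/negP => /dvdn_leq.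
by move=> /(_ hb); rewrite leqNgt hbm.
Qed.

Lemma coprime_mul_modn_inj {m L i j : nat} :
  coprime m L -> i < m -> j < m -> (i * L) %% m = (j * L) %% m -> i = j.
Proof.
move=> hc; wlog hji : i j / j <= i.
  move=> wl hi hj e; case: (leqP j i) => h; first exact: wl.
  by apply/esym/wl => //; exact: ltnW.
move=> hi hj /eqP; rewrite eqn_mod_dvd ?leq_mul2r ?hji ?orbT //.
rewrite -mulnBl Gauss_dvdl // => /dvdn_leq hdvd.
by case: (posnP (i - j)) => [|/hdvd]; lia.
Qed.

Local Open Scope ring_scope.

Lemma natr_sub_div_in01 (R : realFieldType) (m x y : nat) :
  (x < m)%nat ->
  (0 <= (x%:R - y%:R) / m%:R :> R) && ((x%:R - y%:R) / m%:R < 1 :> R)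
  = (y <= x)%nat.
Proof.
move=> hxm; have hm : 0 < m%:R :> R by rewrite ltr0n; lia.
rewrite ler_pdivlMr // ltr_pdivrMr // mul0r mul1r subr_ge0 ler_nat.
case: (leqP y x) => //= _.
by rewrite ltrBlDr ltr_wpDr // ltr_nat.
Qed.

Lemma sum_nth_natr (R : pzSemiRingType) (s : seq nat) :
  \sum_(k < size s) ((nth 0%nat s k)%:R : R) = (sumn s)%:R.
Proof.
by rewrite -natr_sum -(big_mkord xpredT (nth 0%nat s)) -(big_nth 0%nat xpredT id) sumnE.
Qed.

(* Coordinate 0 minus the sum of the others equals c (1 - sumn lam), so the
   coefficients of a point of Pi_lam are unique as soon as sumn lam <> 1. *)
Lemma inPi_coords {lam : seq nat} {v : nat -> int} {a : nat -> R} {c : R} :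
  sumn lam != 1%nat ->
  (v 0%nat)%:~R = \sum_(k < size lam) a k + c ->
  (forall t, (t < size lam)%nat -> (v t.+1)%:~R = a t + c * (nth 0%nat lam t)%:R) ->
  inPi lam v <->
    (forall k, (k < size lam)%nat -> 0 <= a k < 1) /\ 0 <= c < 1.
Proof.
set d := size lam => hS hv0 hvt; split.
- move=> [g [hg hg0 hgt]].
  have hga t : (t < d)%nat -> g t = a t + (c - g d) * (nth 0%nat lam t)%:R.
    by move=> ht; have := hgt t ht; rewrite hvt //; lra.
  have hgd : g d = c.
    move: hg0; rewrite big_ord_recr /= hv0.
    under eq_bigr => k _ do rewrite /= hga //.
    rewrite big_split /= -mulr_sumr sum_nth_natr => e.
    have : (c - g d) * (1 - (sumn lam)%:R) = 0 by lra.
    move/eqP; rewrite mulf_eq0 !subr_eq0 [1 == _]eq_sym pnatr_eq1 (negPf hS) orbF.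
    by move=> /eqP ->.
  have hag t : (t < d)%nat -> g t = a t.
    by move=> ht; rewrite hga // hgd subrr mul0r addr0.
  split=> [k hk|]; first by rewrite -hag //; have [-> ->] := hg k (ltnW hk).
  by rewrite -hgd; have [-> ->] := hg d (leqnn d).
- move=> [ha hc]; exists (fun k => if k == d then c else a k); split.
  + move=> k hk; case: eqP => [_|/eqP hne]; apply/andP => //.
    by apply: ha; rewrite ltn_neqAle hne.
  + rewrite big_ord_recr /= eqxx hv0; congr (_ + _).
    by apply: eq_bigr => k _; rewrite ltn_eqF.
  + by move=> t ht; rewrite eqxx (ltn_eqF ht) hvt.
Qed.

Lemma pcoord0E (R : pzRingType) (lam : seq nat) (n b : nat) :
  (pcoord lam n b 0)%:~R =
    \sum_(t < size lam) (pcoord lam n b t.+1)%:~R - b%:R :> R.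
Proof.
rewrite /pcoord /= intrB (big_nth 0%nat) big_mkord -pmulrn natr_sum.
by congr (_ - _); apply: eq_bigr => t _; rewrite -pmulrn.
Qed.

Section CoprimeCoordinates.

Variables (lam : seq nat) (n : nat).
Hypotheses (hn : (2 <= n)%nat) (hsum : sumn lam = n)
  (hcop : forall t, (t < size lam)%nat -> coprime n.-1 (nth 0%nat lam t)).

Local Notation m := n.-1.

Lemma pcoord_succE (R : numFieldType) (b t : nat) :
  (t < size lam)%nat -> (0 < b < m)%nat ->
  (pcoord lam n b t.+1)%:~R =
    ((b * nth 0%nat lam t)%:R - (s_coef lam n t b)%:R) / m%:R + 1 :> R.
Proof.
move=> ht hb; have hm : (0 < m)%nat by case/andP: hb; lia.
rewrite /pcoord /= ceil_div_nondvd //; last exact: coprime_Ndvdn_mul (hcop t ht) hb.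
rewrite -pmulrn -natr1 /s_coef; congr (_ + 1).
rewrite [X in X%:R - _](divn_eq (b * _) m) natrD natrM addrK mulfK //.
by rewrite pnatr_eq0 -lt0n.
Qed.

Lemma preceq_iff_le (i j : nat) : (0 < i < m)%nat -> (0 < j < m)%nat ->
  preceq lam n i j <->
    (forall t, (t < size lam)%nat -> s_coef lam n t j <= s_coef lam n t i)%nat
    /\ (i <= j)%nat.
Proof.
move=> hi hj; have hm : (0 < m)%nat by case/andP: hi; lia.
pose a t := ((s_coef lam n t i)%:R - (s_coef lam n t j)%:R) / (m%:R : R).
pose c := (j%:R - i%:R) / (m%:R : R).
have hcm : c * m%:R = j%:R - i%:R by rewrite mulfVK // pnatr_eq0 -lt0n.
have hcoord t : (t < size lam)%nat ->
    (pcoord lam n j t.+1 - pcoord lam n i t.+1)%:~R = a t + c * (nth 0%nat lam t)%:R.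
  by move=> ht; rewrite intrB !pcoord_succE // !natrM /a /c /=; ring.
have hcoord0 : (pcoord lam n j 0 - pcoord lam n i 0)%:~R = \sum_(k < size lam) a k + c.
  have hS : \sum_(t < size lam) (pcoord lam n j t.+1)%:~R
            - \sum_(t < size lam) (pcoord lam n i t.+1)%:~R
          = \sum_(k < size lam) a k + c * (m%:R + 1) :> R.
    rewrite -sumrB; under eq_bigr => t _ do rewrite -intrB hcoord //.
    have hn1 : n%:R = m%:R + 1 :> R by rewrite natr1 prednK // ltnW.
    by rewrite big_split -mulr_sumr sum_nth_natr hsum hn1.
  by rewrite intrB !pcoord0E; move: hS; rewrite mulrDr mulr1 hcm; lra.
have hS : sumn lam != 1%nat by rewrite hsum; case: n hn => [|[]].
rewrite /preceq (inPi_coords hS hcoord0 hcoord).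
have ha t : (t < size lam)%nat -> (0 <= a t < 1) = (s_coef lam n t j <= s_coef lam n t i)%nat.
  by move=> ht; apply: natr_sub_div_in01; rewrite ltn_mod.
have hc : (0 <= c < 1) = (i <= j)%nat by apply: natr_sub_div_in01; case/andP: hj.
rewrite hc; split=> [] [hst hij]; split=> // t ht; first by rewrite -ha ?hst.
by rewrite ha ?hst.
Qed.

End CoprimeCoordinates.

Local Close Scope ring_scope.

Theorem corollary2p18 (lam : seq nat) (n : nat) :
  (2 <= n)%N -> is_partition n lam ->
  (forall t, (t < size lam)%N -> coprime n.-1 (nth 0%nat lam t)) ->
  forall i j : nat, (1 <= i <= n - 2)%N -> (1 <= j <= n - 2)%N -> i <> j ->
  (preceq lam n i j <->
     (i < j)%N /\
     (forall t, (t < size lam)%N ->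
        (s_coef lam n t j < s_coef lam n t i)%N /\ (0 < s_coef lam n t j)%N)).
Proof.
move=> hn [_ _ hsum] hcop i j hi hj hij.
have hrange b : (1 <= b <= n - 2) -> (0 < b < n.-1) by lia.
rewrite preceq_iff_le ?hrange //.
have hs_neq t : (t < size lam) -> s_coef lam n t j != s_coef lam n t i.
  move=> ht; apply/eqP => /(coprime_mul_modn_inj (hcop t ht)); lia.
have hs_pos t : (t < size lam) -> (0 < s_coef lam n t j).
  by move=> ht; rewrite lt0n; apply: coprime_Ndvdn_mul (hcop t ht) _; exact: hrange.
split=> [[hst hle]|[hlt hst]]; split.
- by rewrite ltn_neqAle hle andbT; apply/eqP.
- by move=> t ht; rewrite ltn_neqAle hs_neq ?hst ?hs_pos.
- by move=> t ht; rewrite ltnW ?(hst t ht).1.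
- exact: ltnW.
Qed.
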